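(* Let $p\ge 3$ be a prime and write $\dfrac{(q^2;q^2)_\infty^2}{(q;q)_\infty(q^p;q^p)_\infty}=\sum_{n\ge0}a_nq^n$. Let $$N=N(p)=\max_s\ \min\Big\{\tfrac{r(r+1)}{2} : 0\le r\le p-1,\ \tfrac{r(r+1)}{2}\equiv s\pmod p\Big\}-p,$$ the maximum over residues $s\in\{0,\dots,p-1\}$ for which the set is nonempty. Then for all $n>N$: $a_n>0$ if $n\equiv \frac{r(r+1)}{2}\pmod p$ for some integer $r$, and $a_n=0$ otherwise.
   Context: For $|q|<1$, $(a;q)_\infty=\prod_{k\ge0}(1-aq^k)$. *)

From mathcomp Require Import all_boot all_order all_algebra.
Set Implicit Arguments. Unset Strict Implicit. Unset Printing Implicit Defensive.
Import Order.TTheory GRing.Theory Num.Theory.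
Local Open Scope ring_scope.

Definition tri (r : nat) : nat := (r * r.+1)./2.

(* Truncated geometric series 1 + X^m + ... + X^(m*n), i.e. 1/(1 - X^m)
   modulo X^(n+1) when m >= 1. *)
Definition geomp (m n : nat) : {poly int} := \sum_(j < n.+1) 'X^(m * j).

(* a p n := coefficient of q^n in (q^2;q^2)_oo^2 / ((q;q)_oo (q^p;q^p)_oo),
   as a formal power series.  Only the factors with index k <= n can affect
   the coefficient of q^n, and the truncated geometric series agree with
   1/(1-q^m) up to degree n, so the n-th coefficient of the polynomial below
   is exactly the n-th power-series coefficient. *)
Definition qcoef (p n : nat) : int :=
  (\prod_(k < n) ((1 - 'X^(2 * k.+1)) ^+ 2 * geomp k.+1 n * geomp (p * k.+1) n))`_n.

(* min { r(r+1)/2 : 0 <= r <= p-1, r(r+1)/2 = s mod p } (meaningful when the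
   set is nonempty; p*p exceeds every element of the set). *)
Definition mintri (p s : nat) : nat :=
  (\big[minn/(p * p)]_(r < p | tri r %% p == s) tri r)%N.

Definition maxmintri (p : nat) : nat :=
  (\max_(s < p | [exists r : 'I_p, tri r %% p == s]) mintri p s)%N.

Definition Nbound (p : nat) : int := (maxmintri p)%:Z - p%:Z.

(* Since (q^2;q^2)_oo = (q;q)_oo (-q;q)_oo, the series is
   (-q;q)_oo^2 (q;q)_oo / (q^p;q^p)_oo.  Gauss's identity
   (-q;q)_oo^2 (q;q)_oo = sum_r q^(r(r+1)/2) follows from the finite q-binomial
   theorem prod_(i < N) (q^a + q^i) = sum_k q^(k(k-1)/2 + a(N-k)) [N, k]_q at
   N = 2M+2, a = M, because (q;q)_n [N, k]_q = 1 modulo q^(n+1) as soon as k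
   and N - k are at least n.  Hence a_n = sum_r P(n - r(r+1)/2), where P(m)
   counts the partitions of m into multiples of p.  As P is nonnegative,
   vanishes off the multiples of p and is positive on them, a_n > 0 exactly
   when some triangular number T <= n satisfies T = n mod p, and a_n = 0
   otherwise.  For n > N the least triangular number in the residue class of
   n is below n + p, hence at most n.  Power series are represented by
   polynomials compared modulo X^(n+1). *)

From mathcomp Require Import all_boot all_order all_algebra.
From mathcomp Require Import zify ring.
Import Order.TTheory GRing.Theory Num.Theory.
Set Implicit Arguments. Unset Strict Implicit. Unset Printing Implicit Defensive.
Local Open Scope ring_scope.

Lemma tri_double r : ((tri r).*2 = r * r.+1)%N.
Proof. by rewrite /tri halfK oddM /= andbN subn0. Qed.

Lemma triS r : (tri r.+1 = tri r + r.+1)%N.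
Proof. have := tri_double r; have := tri_double r.+1; nia. Qed.

Lemma tri_pred r : tri r = (tri r.-1 + r)%N.
Proof. by case: r => [|r] //; rewrite triS. Qed.

Lemma triD a b : (tri (a + b) = tri a + tri b + a * b)%N.
Proof. have := tri_double a; have := tri_double b; have := tri_double (a + b); nia. Qed.

Lemma leq_tri r : (r <= tri r)%N.
Proof. have := tri_double r; nia. Qed.

Lemma sum_ord_tri n : (\sum_(i < n.+1) i = tri n)%N.
Proof. by elim: n => [|n IH]; rewrite ?big_ord1 // big_ord_recr IH triS. Qed.

Lemma eqn_modMl p k a b : coprime p k ->
  (k * a == k * b %[mod p])%N = (a == b %[mod p])%N.
Proof.
move=> cop_pk; wlog le_ba : a b / (b <= a)%N.
  by move=> IH; case: (leqP b a) => [|/ltnW] /IH //; rewrite eq_sym => ->; rewrite eq_sym.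
by rewrite !eqn_mod_dvd ?leq_mul2l ?le_ba ?orbT // -mulnBr Gauss_dvdr.
Qed.

Lemma tri_modn p r : odd p -> (tri (r %% p) = tri r %[mod p])%N.
Proof.
move=> p_odd; apply/eqP; rewrite -(@eqn_modMl p 2) ?coprimen2 //.
by rewrite !mul2n !tri_double -modnMm -[(r %% p).+1]addn1 modnDml addn1 modn_mod modnMm.
Qed.

Definition eqmodX (R : nzSemiRingType) (m : nat) (a b : {poly R}) :=
  forall i, (i < m)%N -> a`_i = b`_i.

Notation "a = b %[modX m ]" := (eqmodX m a b)
  (at level 70, b at next level, format "a  =  b  %[modX  m ]") : ring_scope.

Section TruncatedEquality.
Variable R : comRingType.
Implicit Types (a b c d u : {poly R}) (m : nat).

Lemma eqmodX_sym m a b : a = b %[modX m] -> b = a %[modX m].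
Proof. by move=> eq_ab i lt_im; rewrite eq_ab. Qed.

Lemma eqmodX_trans m a b c : a = b %[modX m] -> b = c %[modX m] -> a = c %[modX m].
Proof. by move=> eq_ab eq_bc i lt_im; rewrite eq_ab ?eq_bc. Qed.

Lemma eqmodXMr m a b c : a = b %[modX m] -> a * c = b * c %[modX m].
Proof.
move=> eq_ab i lt_im; rewrite !coefM; apply: eq_bigr => j _.
by rewrite eq_ab // (leq_ltn_trans _ lt_im) // -ltnS.
Qed.

Lemma eqmodXM m a b c d : a = b %[modX m] -> c = d %[modX m] -> a * c = b * d %[modX m].
Proof.
move=> eq_ab eq_cd; apply: eqmodX_trans (eqmodXMr c eq_ab) _.
by rewrite !(mulrC b); apply: eqmodXMr.
Qed.

Lemma eqmodXD m a b c d : a = b %[modX m] -> c = d %[modX m] -> a + c = b + d %[modX m].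
Proof. by move=> eq_ab eq_cd i lt_im; rewrite !coefD eq_ab ?eq_cd. Qed.

Lemma eqmodX_sum m n (F G : nat -> {poly R}) :
  (forall i, (i < n)%N -> F i = G i %[modX m]) ->
  \sum_(i < n) F i = \sum_(i < n) G i %[modX m].
Proof. by move=> eqFG j lt_jm; rewrite !coef_sum; apply: eq_bigr => i _; apply: eqFG. Qed.

Lemma eqmodX_prod m n (F G : nat -> {poly R}) :
  (forall i, (i < n)%N -> F i = G i %[modX m]) ->
  \prod_(i < n) F i = \prod_(i < n) G i %[modX m].
Proof.
elim: n => [|n IH] eqFG; first by rewrite !big_ord0.
rewrite !big_ord_recr /=; apply: eqmodXM; last exact: eqFG.
by apply: IH => i lt_in; apply: eqFG; apply: ltnW.
Qed.

Lemma eqmodX_Xn_mul0 m e a : (m <= e)%N -> 'X^e * a = 0 %[modX m].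
Proof. by move=> le_me i lt_im; rewrite coefXnM coef0 (leq_trans lt_im le_me). Qed.

Lemma eqmodX_1DXn m e : (m <= e)%N -> (1 + 'X^e : {poly R}) = 1 %[modX m].
Proof.
move=> le_me i lt_im.
by rewrite coefD coefXn ltn_eqF ?addr0 // (leq_trans lt_im le_me).
Qed.

Lemma eqmodX_1BXn m e : (m <= e)%N -> (1 - 'X^e : {poly R}) = 1 %[modX m].
Proof.
move=> le_me i lt_im.
by rewrite coefB coefXn ltn_eqF ?subr0 // (leq_trans lt_im le_me).
Qed.

Lemma eqmodX_prod_tail m n L (F : nat -> {poly R}) : (n <= L)%N ->
  (forall j, (n <= j)%N -> F j = 1 %[modX m]) ->
  \prod_(j < L) F j = \prod_(j < n) F j %[modX m].
Proof.
move=> /subnKC <-; elim: (L - n)%N => [|d IH] F1; first by rewrite addn0.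
rewrite addnS big_ord_recr /= -[X in _ = X %[modX m]]mulr1.
by apply: eqmodXM; [exact: IH | apply: F1; apply: leq_addr].
Qed.

Lemma eqmodX_regr m a b u : GRing.lreg u`_0 ->
  a * u = b * u %[modX m] -> a = b %[modX m].
Proof.
move=> reg_u0 eq_abu; suff eq0 i : (i < m)%N -> (a - b)`_i = 0.
  by move=> i /eq0 /eqP; rewrite coefB subr_eq0 => /eqP.
elim/ltn_ind: i => i IH lt_im; apply: reg_u0; rewrite mulr0 mulrC.
have := eq_abu i lt_im; move/eqP; rewrite -subr_eq0 -coefB -mulrBl coefM.
rewrite big_ord_recr /= subnn big1 ?add0r => [/eqP //|j _].
by rewrite IH ?mul0r // (ltn_trans _ lt_im).
Qed.

End TruncatedEquality.

Section QSeries.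
Variable R : comRingType.

Fixpoint qbin (N k : nat) : {poly R} :=
  match N, k with
  | 0, 0 => 1
  | 0, _.+1 => 0
  | N'.+1, 0 => 1
  | N'.+1, k'.+1 => qbin N' k'.+1 + 'X^(N' - k') * qbin N' k'
  end.

Definition qpoch (j : nat) : {poly R} := \prod_(i < j) (1 - 'X^(i.+1)).

Lemma qpochS j : qpoch j.+1 = qpoch j * (1 - 'X^(j.+1)).
Proof. by rewrite /qpoch big_ord_recr. Qed.

Lemma qbin0 N : qbin N 0 = 1. Proof. by case: N. Qed.

Lemma qbin_small N k : (N < k)%N -> qbin N k = 0.
Proof. by elim: N k => [|N IH] [|k] //= lt_Nk; rewrite !IH ?mulr0 ?addr0 // ltnW. Qed.

Lemma qbin_fact N k : (k <= N)%N -> qpoch k * qpoch (N - k) * qbin N k = qpoch N.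
Proof.
elim: N k => [|N IH] [|k] //=.
- by rewrite /qpoch big_ord0 !mulr1.
- by rewrite subn0 /qpoch big_ord0 mul1r mulr1.
rewrite ltnS subSS => le_kN; rewrite mulrDr qpochS.
have -> : qpoch k * (1 - 'X^(k.+1)) * qpoch (N - k) * ('X^(N - k) * qbin N k)
          = (1 - 'X^(k.+1)) * 'X^(N - k) * (qpoch k * qpoch (N - k) * qbin N k) by ring.
rewrite IH // qpochS; case: (ltngtP k N) le_kN => // [lt_kN|->] _; last first.
  by rewrite qbin_small // mulr0 add0r subnn expr0 mulr1 mulrC.
rewrite -(subnSK lt_kN) qpochS -qpochS.
have -> : qpoch k.+1 * (qpoch (N - k.+1) * (1 - 'X^((N - k.+1).+1))) * qbin N k.+1
          = (1 - 'X^((N - k.+1).+1)) * (qpoch k.+1 * qpoch (N - k.+1) * qbin N k.+1)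
  by ring.
have -> : 'X^(N.+1) = 'X^((N - k.+1).+1) * 'X^(k.+1) :> {poly R}.
  by rewrite -exprD; congr 'X^_; lia.
by rewrite IH //; ring.
Qed.

Lemma qbinomial a N : \prod_(i < N) ('X^a + 'X^i) =
  \sum_(k < N.+1) 'X^(tri k.-1 + a * (N - k)) * qbin N k.
Proof.
elim: N => [|N IH]; first by rewrite big_ord0 big_ord1 /= muln0 expr0 mul1r.
rewrite big_ord_recr /= IH mulrDr !mulr_suml [in RHS]big_ord_recl /= ?qbin0 mulr1.
rewrite (big_ord_recl N (fun i : 'I_N.+1 => _ * 'X^a)) /= ?qbin0 mulr1 -exprD.
have -> : (0 + a * (N - 0) + a = 0 + a * N.+1)%N by nia.
rewrite -!addrA; congr (_ + _).
under [RHS]eq_bigr => k _ do rewrite /bump /= !add0n add1n subSS mulrDr.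
under eq_bigr => k _ do rewrite /bump /= !add0n add1n.
rewrite big_split /=; congr (_ + _).
- rewrite big_ord_recr /= qbin_small // mulr0 addr0.
  apply: eq_bigr => k _; rewrite mulrAC -exprD; congr ('X^_ * _).
  by have := ltn_ord k; nia.
- apply: eq_bigr => k _; rewrite mulrCA mulrA -exprD mulrAC -exprD.
  congr ('X^_ * _); have := ltn_ord k; rewrite ltnS (tri_pred k); nia.
Qed.

Definition npoch (L : nat) : {poly R} := \prod_(j < L) (1 + 'X^(j.+1)).

Lemma prod_Xn (n : nat) (f : nat -> nat) :
  \prod_(i < n) ('X^(f i) : {poly R}) = 'X^(\sum_(i < n) f i).
Proof. by elim: n => [|n IH]; rewrite ?big_ord0 // !big_ord_recr /= IH exprD. Qed.

Lemma prod_XnDX_low M :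
  \prod_(i < M.+1) ('X^M + 'X^i) = 'X^(tri M) * (2 * npoch M) :> {poly R}.
Proof.
rewrite (eq_bigr (fun i : 'I_M.+1 => 'X^i * (1 + 'X^(M - i)))); last first.
  by move=> i _; rewrite mulrDr mulr1 -exprD subnKC 1?addrC // -ltnS.
rewrite big_split /= (prod_Xn _ (fun i => i)) sum_ord_tri (reindex_inj rev_ord_inj) /=.
rewrite big_ord_recl /= subn1 subnn expr0 /npoch; congr (_ * (_ * _)).
by apply: eq_bigr => i _; rewrite /bump /= add1n subSS subKn // ltnW.
Qed.

Lemma prod_XnDX_high M :
  \prod_(i < M.+1) ('X^M + 'X^(M.+1 + i)) = 'X^(M * M.+1) * npoch M.+1 :> {poly R}.
Proof.
rewrite /npoch (eq_bigr (fun i : 'I_M.+1 => 'X^M * (1 + 'X^(i.+1)))).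
  by rewrite big_split /= prodr_const card_ord -exprM.
by move=> i _; rewrite mulrDr mulr1 -exprD addSnnS.
Qed.

(* For k = 0, ..., 2M+2 this runs through tri M, ..., tri 0, tri 0, ..., tri M.+1:
   both halves of the finite triple product are partial sums of Gauss's series. *)
Definition jexp (M k : nat) : nat :=
  if (M < k)%N then tri (k - M.+1) else tri (M - k).

Lemma jexp_shift M k : (k <= M.+1 + M.+1)%N ->
  (tri k.-1 + M * (M.+1 + M.+1 - k) = tri M + M * M.+1 + jexp M k)%N.
Proof.
rewrite /jexp; case: ltnP => [lt_Mk | le_kM] le_k.
- have [t def_k] : exists t, k = (M.+1 + t)%N by exists (k - M.+1)%N; lia.
  have le_tM : (t <= M.+1)%N by lia.
  have : (M * t <= M * M.+1)%N by rewrite leq_mul2l le_tM orbT.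
  rewrite def_k addKn addSn /= triD subnDl mulnBr; lia.
- have [s def_M] : exists s, M = (k + s)%N by exists (M - k)%N; lia.
  rewrite def_M addKn triD.
  have := tri_pred k; have := tri_double k; have := tri_double s; nia.
Qed.

Lemma npoch_npochS_qbin M : 2 * npoch M * npoch M.+1 =
  \sum_(k < (M.+1 + M.+1).+1) 'X^(jexp M k) * qbin (M.+1 + M.+1) k.
Proof.
apply: (monic_lreg (monicXn R (tri M + M * M.+1))); rewrite mulr_sumr.
transitivity (\sum_(k < (M.+1 + M.+1).+1)
  'X^(tri k.-1 + M * (M.+1 + M.+1 - k)) * qbin (M.+1 + M.+1) k).
  by rewrite -qbinomial big_split_ord /= prod_XnDX_low prod_XnDX_high exprD; ring.
by apply: eq_bigr => k _; rewrite mulrA -exprD jexp_shift // -ltnS.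
Qed.

Lemma qpoch_coef0 n : (qpoch n)`_0 = 1.
Proof.
elim: n => [|n IH]; first by rewrite /qpoch big_ord0 coef1.
by rewrite qpochS coef0M IH coefB coef1 coefXn subr0 mul1r.
Qed.

Lemma qpoch_trunc n j : (n <= j)%N -> qpoch j = qpoch n %[modX n.+1].
Proof.
move=> le_nj; apply: (eqmodX_prod_tail (F := fun i => 1 - 'X^(i.+1))) => // i le_ni.
exact: eqmodX_1BXn.
Qed.

Lemma npoch_trunc n j : (n <= j)%N -> npoch j = npoch n %[modX n.+1].
Proof.
move=> le_nj; apply: (eqmodX_prod_tail (F := fun i => 1 + 'X^(i.+1))) => // i le_ni.
exact: eqmodX_1DXn.
Qed.

Lemma qbin_qpoch_trunc n N k : (k <= N)%N -> (n <= k)%N -> (n <= N - k)%N ->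
  qbin N k * qpoch n = 1 %[modX n.+1].
Proof.
move=> le_kN le_nk le_nNk.
apply: (@eqmodX_regr _ _ _ _ (qpoch n)); first by rewrite qpoch_coef0; apply: lreg1.
have -> : qbin N k * qpoch n * qpoch n = qpoch n * qpoch n * qbin N k by ring.
rewrite mul1r.
apply: eqmodX_trans (_ : _ = qpoch k * qpoch (N - k) * qbin N k %[modX n.+1]) _.
  by apply: eqmodXMr; apply: eqmodXM; apply: eqmodX_sym; apply: qpoch_trunc.
by rewrite qbin_fact //; apply: qpoch_trunc; lia.
Qed.

Definition trisum n : {poly R} := \sum_(r < n.+1) 'X^(tri r).

Lemma trisum_trunc n L : (n < L)%N ->
  \sum_(r < L) 'X^(tri r) = trisum n %[modX n.+1].
Proof.
move=> /subnKC <-; rewrite big_split_ord /trisum -[X in _ = X %[modX _]]addr0.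
apply: eqmodXD => // i lt_in; rewrite coef0 coef_sum big1 // => r _.
by rewrite coefXn ltn_eqF // (leq_trans lt_in) // (leq_trans _ (leq_tri _)) ?leq_addr.
Qed.

Lemma sum_jexp M :
  \sum_(k < (M.+1 + M.+1).+1) 'X^(jexp M k) = trisum M + trisum M.+1 :> {poly R}.
Proof.
rewrite -addnS big_split_ord; congr (_ + _).
  rewrite /trisum (reindex_inj rev_ord_inj); apply: eq_bigr => i _.
  by rewrite /jexp /= subSS ltnNge leq_subr subKn // -ltnS.
by rewrite /trisum; apply: eq_bigr => i _; rewrite /jexp /= ltnS leq_addr addKn.
Qed.

Lemma qbin_jexp_trunc n M k : (n + n <= M)%N -> (k <= M.+1 + M.+1)%N ->
  'X^(jexp M k) * qbin (M.+1 + M.+1) k * qpoch n = 'X^(jexp M k) %[modX n.+1].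
Proof.
move=> le_2nM le_k; rewrite -mulrA; case: (leqP n.+1 (jexp M k)) => [le_nj | lt_jn].
  apply: eqmodX_trans (eqmodX_Xn_mul0 _ le_nj) _.
  by apply: eqmodX_sym; rewrite -[X in X = _ %[modX _]]mulr1; apply: eqmodX_Xn_mul0.
rewrite -[X in _ = X %[modX _]]mulr1; apply: eqmodXM => //.
move: lt_jn; rewrite /jexp ltnS; have := leq_tri (k - M.+1); have := leq_tri (M - k).
by case: ltnP => ? ? ? ?; apply: qbin_qpoch_trunc; lia.
Qed.

Lemma npoch_npochS_qpoch_trunc n M : (n + n <= M)%N ->
  2 * npoch M * npoch M.+1 * qpoch n = 2 * trisum n %[modX n.+1].
Proof.
move=> le_2nM; rewrite npoch_npochS_qbin mulr_suml.
apply: eqmodX_trans (_ : _ = \sum_(k < (M.+1 + M.+1).+1) 'X^(jexp M k) %[modX n.+1]) _.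
  apply: (eqmodX_sum (F := fun k => 'X^(jexp M k) * qbin (M.+1 + M.+1) k * qpoch n)
                     (G := fun k => 'X^(jexp M k))) => k.
  by rewrite ltnS; apply: qbin_jexp_trunc.
rewrite sum_jexp mulr_natl mulr2n.
by apply: eqmodXD; rewrite /trisum; apply: trisum_trunc; lia.
Qed.

Lemma prod_1BX2 n :
  \prod_(k < n) (1 - 'X^(2 * k.+1)) = npoch n * qpoch n :> {poly R}.
Proof.
rewrite /npoch /qpoch -big_split; apply: eq_bigr => i _ /=.
by rewrite mul2n -addnn exprD; ring.
Qed.

End QSeries.

Lemma gauss_trunc n : (\prod_(k < n) (1 - 'X^(2 * k.+1))) ^+ 2 =
  trisum int n * qpoch int n %[modX n.+1].
Proof.
have npoch2_qpoch : npoch int n * npoch int n * qpoch int n = trisum int n %[modX n.+1].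
  apply: (@eqmodX_regr _ _ _ _ 2); first by rewrite coefMn coef1; apply: mulfI.
  rewrite ![_ * 2]mulrC !mulrA.
  apply: eqmodX_trans _ (npoch_npochS_qpoch_trunc int (leqnn (n + n))).
  apply/eqmodXMr/eqmodXM; first apply: eqmodXM => //.
  1, 2: by apply: eqmodX_sym; apply: npoch_trunc; lia.
rewrite (prod_1BX2 int n).
rewrite (_ : _ ^+ 2 = npoch int n * npoch int n * qpoch int n * qpoch int n); last by ring.
exact: eqmodXMr.
Qed.

Lemma geomp_mul1BXn m n : geomp m n * (1 - 'X^m) = 1 - 'X^(m * n.+1).
Proof.
elim: n => [|n IH]; first by rewrite /geomp big_ord1 muln0 expr0 mul1r muln1.
rewrite /geomp big_ord_recr /= -/(geomp m n) mulrDl IH.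
by rewrite (_ : m * n.+2 = m * n.+1 + m)%N ?exprD; [ring | rewrite mulnS addnC].
Qed.

Lemma geomp_trunc m n : (0 < m)%N -> geomp m n * (1 - 'X^m) = 1 %[modX n.+1].
Proof. by move=> m_gt0; rewrite geomp_mul1BXn; apply: eqmodX_1BXn; rewrite leq_pmull. Qed.

(* Truncation of 1/(q^p;q^p)_oo, the generating function of partitions into
   multiples of p. *)
Definition partgen p n : {poly int} := \prod_(k < n) geomp (p * k.+1) n.

Lemma qcoefE p n : qcoef p n = (trisum int n * partgen p n)`_n.
Proof.
suff trunc : \prod_(k < n) ((1 - 'X^(2 * k.+1)) ^+ 2 * geomp k.+1 n * geomp (p * k.+1) n)
   = trisum int n * partgen p n %[modX n.+1] by exact: trunc.
apply: (@eqmodX_regr _ _ _ _ (qpoch int n)); first by rewrite qpoch_coef0; apply: lreg1.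
have geomp_qpoch : \prod_(k < n) geomp k.+1 n * qpoch int n = 1 %[modX n.+1].
  rewrite /qpoch -big_split.
  have := eqmodX_prod (m := n.+1) (n := n)
    (F := fun k => geomp k.+1 n * (1 - 'X^(k.+1))) (G := fun=> 1).
  by rewrite big1_eq; apply => k _; apply: geomp_trunc.
rewrite !big_split /= -/(partgen p n); set a := \prod_(i < n) _.
have -> : a * a * \prod_(i < n) geomp i.+1 n * partgen p n * qpoch int n
        = a ^+ 2 * (\prod_(i < n) geomp i.+1 n * qpoch int n) * partgen p n by ring.
have -> : trisum int n * partgen p n * qpoch int n
        = trisum int n * qpoch int n * 1 * partgen p n by ring.
by apply/eqmodXMr/eqmodXM => //; apply: gauss_trunc.
Qed.

Definition nneg_coef (f : {poly int}) := forall i, 0 <= f`_i.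

Definition dvdn_supp (p : nat) (f : {poly int}) := forall i, ~~ (p %| i)%N -> f`_i = 0.

Lemma nneg_coef1 : nneg_coef 1.
Proof. by move=> i; rewrite coef1; case: (i == 0)%N. Qed.

Lemma nneg_coefM f g : nneg_coef f -> nneg_coef g -> nneg_coef (f * g).
Proof. by move=> f_ge0 g_ge0 i; rewrite coefM sumr_ge0 // => j _; rewrite mulr_ge0. Qed.

Lemma dvdn_supp1 p : dvdn_supp p 1.
Proof. by move=> [|i]; rewrite ?dvdn0 // coef1. Qed.

Lemma dvdn_suppM p f g : dvdn_supp p f -> dvdn_supp p g -> dvdn_supp p (f * g).
Proof.
move=> supp_f supp_g i p_ndvd_i; rewrite coefM big1 // => j _.
have [p_dvd_j | /supp_f -> ] := boolP (p %| j)%N; last by rewrite mul0r.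
rewrite supp_g ?mulr0 //; apply: contra p_ndvd_i => p_dvd_ij.
by rewrite -(subnKC (_ : j <= i)%N) ?dvdn_add // -ltnS.
Qed.

Lemma ler_coefM_coef0 f g j : nneg_coef f -> nneg_coef g -> f`_j * g`_0 <= (f * g)`_j.
Proof.
move=> f_ge0 g_ge0; rewrite coefM big_ord_recr /= subnn lerDr.
by apply: sumr_ge0 => i _; apply: mulr_ge0.
Qed.

Lemma coef_geomp m n i : (geomp m n)`_i = \sum_(j < n.+1) (i == m * j)%N%:R.
Proof. by rewrite /geomp coef_sum; apply: eq_bigr => j _; rewrite coefXn. Qed.

Lemma nneg_coef_geomp m n : nneg_coef (geomp m n).
Proof. by move=> i; rewrite coef_geomp sumr_ge0 // => j _; case: (_ == _). Qed.

Lemma dvdn_supp_geomp p k n : dvdn_supp p (geomp (p * k) n).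
Proof.
move=> i p_ndvd_i; rewrite coef_geomp big1 // => j _.
by case: eqP p_ndvd_i => // ->; rewrite -mulnA dvdn_mulr.
Qed.

Lemma geomp_coef0 m n : (0 < m)%N -> (geomp m n)`_0 = 1.
Proof.
move=> m_gt0; rewrite coef_geomp big_ord_recl /= muln0 big1 ?addr0 // => j _.
by rewrite eq_sym muln_eq0 (gtn_eqF m_gt0).
Qed.

Lemma geomp_coef_ge1 m n j : (j <= n)%N -> 1 <= (geomp m n)`_(m * j).
Proof.
rewrite -ltnS => lt_jn; rewrite coef_geomp (bigD1 (Ordinal lt_jn)) //= eqxx lerDl.
by rewrite sumr_ge0 // => i _; case: (_ == _).
Qed.

Lemma nneg_coef_prod (I : Type) (r : seq I) (P : pred I) (F : I -> {poly int}) :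
  (forall i, P i -> nneg_coef (F i)) -> nneg_coef (\prod_(i <- r | P i) F i).
Proof. by move=> F_ge0; apply: big_ind => //; [apply: nneg_coef1 | apply: nneg_coefM]. Qed.

Lemma dvdn_supp_prod p (I : Type) (r : seq I) (P : pred I) (F : I -> {poly int}) :
  (forall i, P i -> dvdn_supp p (F i)) -> dvdn_supp p (\prod_(i <- r | P i) F i).
Proof. by move=> supp_F; apply: big_ind => //; [apply: dvdn_supp1 | apply: dvdn_suppM]. Qed.

Lemma nneg_coef_partgen p n : nneg_coef (partgen p n).
Proof. by apply: nneg_coef_prod => k _; apply: nneg_coef_geomp. Qed.

Lemma dvdn_supp_partgen p n : dvdn_supp p (partgen p n).
Proof. by apply: dvdn_supp_prod => k _; apply: dvdn_supp_geomp. Qed.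

Lemma partgen_coef_ge1 p n l : (0 < p)%N -> (p * l <= n)%N -> 1 <= (partgen p n)`_(p * l).
Proof.
move=> p_gt0 le_pln; have geomp_p_coef0 k : (geomp (p * k.+1) n)`_0 = 1.
  by rewrite geomp_coef0 // muln_gt0 p_gt0.
case: l le_pln => [|l] le_pln.
  rewrite muln0 -horner_coef0 horner_prod big1 // => k _.
  by rewrite horner_coef0 geomp_p_coef0.
have lt0n : (0 < n)%N by apply: leq_trans le_pln; rewrite muln_gt0 p_gt0.
rewrite /partgen (bigD1 (Ordinal lt0n)) //=; apply: le_trans (ler_coefM_coef0 _ _ _); last first.
- by apply: nneg_coef_prod => k _; apply: nneg_coef_geomp.
- exact: nneg_coef_geomp.
rewrite -horner_coef0 horner_prod big1 => [|k _]; last first.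
  by rewrite horner_coef0 geomp_p_coef0.
by rewrite mulr1 muln1 geomp_coef_ge1 // (leq_trans _ le_pln) // leq_pmull.
Qed.

Lemma coef_trisum n i : (trisum int n)`_i = \sum_(r < n.+1) (i == tri r)%N%:R.
Proof. by rewrite /trisum coef_sum; apply: eq_bigr => r _; rewrite coefXn. Qed.

Lemma nneg_coef_trisum n : nneg_coef (trisum int n).
Proof. by move=> i; rewrite coef_trisum sumr_ge0 // => r _; case: (_ == _). Qed.

Lemma trisum_coef_neq0 n i : (trisum int n)`_i != 0 -> exists r, i = tri r.
Proof.
rewrite coef_trisum; have [r /eqP-> _ | no_r] := pickP (fun r : 'I_n.+1 => i == tri r).
  by exists r.
by rewrite big1 ?eqxx // => r _; rewrite no_r.
Qed.

Lemma trisum_coef_ge1 n r : (tri r <= n)%N -> 1 <= (trisum int n)`_(tri r).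
Proof.
move=> le_rn; have lt_rn : (r < n.+1)%N by apply: leq_ltn_trans (leq_tri r) _.
rewrite coef_trisum (bigD1 (Ordinal lt_rn)) //= eqxx lerDl.
by rewrite sumr_ge0 // => j _; case: (_ == _).
Qed.

Lemma trisum_partgen_coef_gt0 p n r : (0 < p)%N -> (tri r <= n)%N ->
  (p %| n - tri r)%N -> 0 < (trisum int n * partgen p n)`_n.
Proof.
move=> p_gt0 le_rn /dvdnP[l def_l]; have lt_rn : (tri r < n.+1)%N by [].
have trisum_gt0 : 0 < (trisum int n)`_(tri r).
  exact: lt_le_trans ltr01 (trisum_coef_ge1 le_rn).
have partgen_gt0 : 0 < (partgen p n)`_(n - tri r).
  rewrite def_l mulnC; apply: lt_le_trans ltr01 (partgen_coef_ge1 p_gt0 _).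
  by rewrite mulnC -def_l leq_subr.
rewrite coefM (bigD1 (Ordinal lt_rn)) //= ltr_pwDl ?mulr_gt0 ?sumr_ge0 // => i _.
by rewrite mulr_ge0 ?nneg_coef_trisum ?nneg_coef_partgen.
Qed.

Lemma trisum_partgen_coef_eq0 p n : ~ (exists r, (n = tri r %[mod p])%N) ->
  (trisum int n * partgen p n)`_n = 0.
Proof.
move=> no_tri; rewrite coefM big1 // => i _.
have [-> | /trisum_coef_neq0 [r def_i]] := eqVneq (trisum int n)`_i 0.
  by rewrite mul0r.
rewrite dvdn_supp_partgen ?mulr0 //; apply/negP => p_dvd; apply: no_tri.
by exists r; apply/eqP; rewrite -def_i eqn_mod_dvd // -ltnS.
Qed.

Lemma mintri_mem p s r : (r < p)%N -> (tri r %% p = s)%N ->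
  exists2 r' : 'I_p, (tri r' %% p = s)%N & mintri p s = tri r'.
Proof.
move=> lt_rp tri_r_s.
have le_min : (mintri p s <= tri r)%N.
  rewrite /mintri -minEnat.
  exact: (@bigmin_le_cond _ _ _ (p * p)%N (Ordinal lt_rp)
           (fun r : 'I_p => tri r %% p == s)%N (fun r : 'I_p => tri r)
           (introT eqP tri_r_s)).
pose attained m := m = (p * p)%N \/ exists2 r' : 'I_p, (tri r' %% p = s)%N & m = tri r'.
have : attained (mintri p s).
  apply: (big_ind attained).
  - by left.
  - by move=> x y Px Py; rewrite /minn; case: ifP.
  - by move=> i /eqP tri_i_s; right; exists i.
by case=> // min_pp; have := tri_double r; nia.
Qed.

Lemma tri_le_of_Nbound p n r : odd p -> Nbound p < n%:Z -> (n = tri r %[mod p])%N ->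
  exists2 r', (tri r' <= n)%N & (p %| n - tri r')%N.
Proof.
move=> p_odd lt_Nn n_tri; have p_gt0 : (0 < p)%N by case: (p) p_odd.
have lt_rp := ltn_pmod r p_gt0.
have [r' tri_r' min_r'] :
    exists2 r' : 'I_p, (tri r' %% p = n %% p)%N & mintri p (n %% p) = tri r'.
  by apply: mintri_mem lt_rp _; rewrite tri_modn // n_tri.
have le_max : (mintri p (n %% p) <= maxmintri p)%N.
  apply: (@leq_bigmax_cond _ _ (fun s : 'I_p => mintri p s) (Ordinal (ltn_pmod n p_gt0))).
  by apply/existsP; exists r'; rewrite tri_r'.
have lt_tri_np : (tri r' < n + p)%N by move: lt_Nn; rewrite /Nbound -min_r'; lia.
have le_tri_n : (tri r' <= n)%N.
  rewrite leqNgt; apply/negP => lt_n_tri.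
  have : (p %| tri r' - n)%N by rewrite -eqn_mod_dvd ?(ltnW lt_n_tri) // tri_r'.
  by move/dvdn_leq; rewrite subn_gt0 => /(_ lt_n_tri); lia.
by exists r' => //; rewrite -eqn_mod_dvd // tri_r'.
Qed.

Theorem theorem1p3 (p : nat) (hp : prime p) (hp3 : (3 <= p)%N) :
  forall n : nat, Nbound p < n%:Z ->
    ((exists r : nat, (n = tri r %[mod p])%N) -> 0 < qcoef p n) /\
    (~ (exists r : nat, (n = tri r %[mod p])%N) -> qcoef p n = 0).
Proof.
have p_odd : odd p by case: (even_prime hp) hp3 => [->|].
move=> n lt_Nn; rewrite qcoefE; split; last exact: trisum_partgen_coef_eq0.
case=> r /(tri_le_of_Nbound p_odd lt_Nn) [r' le_r'n p_dvd].
exact: trisum_partgen_coef_gt0 (prime_gt0 hp) le_r'n p_dvd.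
Qed.
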